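(* Let $r:\mathfrak h^*\to\wedge^2\mathfrak g$ be a triangular dynamical $r$-matrix. The following are equivalent: (i) $r$ is splittable, i.e. $i^*\big(r(\lambda)^{\#-1}(\mathfrak h)\big)=\mathfrak h^*$ for every $\lambda\in\mathfrak h^*$, where $r(\lambda)^{\#-1}(\mathfrak h)=\{\xi\in\mathfrak g^*: r(\lambda)^\#\xi\in\mathfrak h\}$; (ii) $r(\lambda)^\#\mathfrak g^*\subset\mathfrak g_\lambda$ for every $\lambda\in\mathfrak h^*$; (iii) for every linear complement $\mathfrak m$ of $\mathfrak h$ in $\mathfrak g$ and every basis $e_1,\dots,e_m$ of $\mathfrak m$, writing $r(\lambda)=\sum a^{ij}(\lambda)h_i\wedge h_j+\sum b^{ij}(\lambda)h_i\wedge e_j+\sum c^{ij}(\lambda)e_i\wedge e_j$ with $a^{ij}=-a^{ji}$, $c^{ij}=-c^{ji}$, one has $\sum_j b^{ij}(\lambda)e_j\in\mathrm{Span}\{\sum_j c^{kj}(\lambda)e_j: k=1,\dots,m\}$ for all $i$ and all $\lambda$; (iv) for each $\lambda\in\mathfrak h^*$ there exist a linear complement $\mathfrak m$ of $\mathfrak h$ in $\mathfrak g$ and a basis $e_1,\dots,e_m$ of $\mathfrak m$ such that $r(\lambda)=\sum a^{ij}(\lambda)h_i\wedge h_j+\sum c^{ij}(\lambda)e_i\wedge e_j$; (v) $T\mathfrak h^*\times\{0\}\subset B$, where $B=\Lambda^\#(A^* )\subset A$.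
   Context: Let $\mathfrak g$ be a finite-dimensional real Lie algebra and $\mathfrak h\subset\mathfrak g$ an abelian Lie subalgebra of dimension $l$ with basis $h_1,\dots,h_l$; $(\lambda^1,\dots,\lambda^l)$ are the induced coordinates on $\mathfrak h^*$. A triangular dynamical $r$-matrix is a smooth map $r:\mathfrak h^*\to\wedge^2\mathfrak g$ with $[h,r(\lambda)]=0$ for $h\in\mathfrak h$ and $\sum_i h_i\wedge\frac{\partial r}{\partial\lambda^i}+\frac12[r,r]=0$ (Schouten-type bracket on $\wedge^\bullet\mathfrak g$). For $\rho\in\wedge^2\mathfrak g$, $\rho^\#:\mathfrak g^*\to\mathfrak g$ is $\langle\rho^\#\xi,\eta\rangle=\rho(\xi,\eta)$; $\mathfrak h^\perp\subset\mathfrak g^*$ is the annihilator of $\mathfrak h$; $i^*:\mathfrak g^*\to\mathfrak h^*$ is restriction; $\mathfrak g_\lambda=\mathfrak h+r(\lambda)^\#\mathfrak h^\perp$. $A=T\mathfrak h^*\times\mathfrak g$ is the bundle over $\mathfrak h^*$ with fiber $A_\lambda\cong\mathfrak h^*\oplus\mathfrak g$, $A^*_\lambda\cong\mathfrak h\oplus\mathfrak g^*$, and $\Lambda^\#:A^*\to A$ is $\Lambda^\#_\lambda(h,\xi)=(i^*\xi,-h+r(\lambda)^\#\xi)$. *)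

From HB Require Import structures.
From mathcomp Require Import all_boot all_order all_algebra.
From mathcomp Require Import all_classical all_reals all_analysis.
Set Implicit Arguments. Unset Strict Implicit. Unset Printing Implicit Defensive.
Import Order.TTheory GRing.Theory Num.Theory.
Import numFieldNormedType.Exports.
Local Open Scope ring_scope.

(*  g = R^n with standard basis (e_a)_a; elements of g and of g^* are row   *)
(*  vectors 'rV[R]_n, the pairing <x, xi> being  x *m xi^T.                 *)
(*  A bivector rho in wedge^2 g is stored as the skew matrix of its         *)
(*  components rho a b = rho(eps^a, eps^b); hence rho(xi,eta) =             *)
(*  xi *m rho *m eta^T and rho^# xi = xi *m rho.  x /\ y is the matrix       *)
(*  x^T y - y^T x, i.e. (x/\y)(xi,eta) = xi(x)eta(y) - xi(y)eta(x).         *)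
(*  A trivector is stored as its (alternating) component function           *)
(*  t a b c = t(eps^a,eps^b,eps^c); x/\y/\z has determinant components.     *)

Section Defs.
Variable R : realType.
Variable n : nat.

Definition bracket (C : 'I_n -> 'I_n -> 'rV[R]_n) (x y : 'rV[R]_n) : 'rV[R]_n :=
  \sum_(a < n) \sum_(b < n) (x 0 a * y 0 b) *: C a b.

(* C defines a Lie algebra structure (bilinearity is built in). *)
Definition is_lie_algebra (C : 'I_n -> 'I_n -> 'rV[R]_n) : Prop :=
  (forall x y, bracket C x y = - bracket C y x) /\
  (forall x y z, bracket C x (bracket C y z) + bracket C y (bracket C z x)
                 + bracket C z (bracket C x y) = 0).

Definition ev (x : 'rV[R]_n) : 'I_n -> R := fun a => x 0 a.

Definition wedge2 (x y : 'rV[R]_n) : 'M[R]_n := x^T *m y - y^T *m x.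

Definition is_bivector (rho : 'M[R]_n) : Prop := rho^T = - rho.

Definition trivector := 'I_n -> 'I_n -> 'I_n -> R.

Definition wedge3 (x y z : 'rV[R]_n) : trivector := fun a b c =>
  ev x a * (ev y b * ev z c - ev y c * ev z b)
  - ev x b * (ev y a * ev z c - ev y c * ev z a)
  + ev x c * (ev y a * ev z b - ev y b * ev z a).

Definition wedge12 (x : 'rV[R]_n) (beta : 'M[R]_n) : trivector := fun a b c =>
  ev x a * beta b c - ev x b * beta a c + ev x c * beta a b.

Definition tv_add (s t : trivector) : trivector := fun a b c => s a b c + t a b c.
Definition tv_scale (k : R) (t : trivector) : trivector := fun a b c => k * t a b c.
Definition tv_zero : trivector := fun _ _ _ => 0.
Definition tv_sum (I : finType) (F : I -> trivector) : trivector :=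
  fun a b c => \sum_(i : I) F i a b c.

Definition std (a : 'I_n) : 'rV[R]_n := delta_mx 0 a.

Definition schouten_dec (C : 'I_n -> 'I_n -> 'rV[R]_n) (x y u v : 'rV[R]_n)
  : trivector :=
  tv_add (tv_add (wedge3 (bracket C x u) y v)
                 (tv_scale (-1) (wedge3 (bracket C x v) y u)))
         (tv_add (tv_scale (-1) (wedge3 (bracket C y u) x v))
                 (wedge3 (bracket C y v) x u)).

(* Bilinear extension: rho = 1/2 sum_{a,b} rho a b e_a /\ e_b *)
Definition schouten (C : 'I_n -> 'I_n -> 'rV[R]_n) (rho sigma : 'M[R]_n)
  : trivector :=
  tv_sum (fun p : 'I_n * 'I_n * ('I_n * 'I_n) =>
    tv_scale ((rho p.1.1 p.1.2 / 2) * (sigma p.2.1 p.2.2 / 2))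
      (schouten_dec C (std p.1.1) (std p.1.2) (std p.2.1) (std p.2.2))).

(* [h, rho] (adjoint action on wedge^2 g):
   [h, x/\y] = [h,x]/\y + x/\[h,y], extended linearly. *)
Definition ad2 (C : 'I_n -> 'I_n -> 'rV[R]_n) (h : 'rV[R]_n) (rho : 'M[R]_n)
  : 'M[R]_n :=
  \sum_(a < n) \sum_(b < n) (rho a b / 2) *:
     (wedge2 (bracket C h (std a)) (std b) + wedge2 (std a) (bracket C h (std b))).

End Defs.

Section Smooth.
Variables (R : realType) (l : nat).
Fixpoint Ck_fun (k : nat) (f : 'rV[R]_l -> R^o) : Prop :=
  match k with
  | 0 => continuous f
  | k'.+1 => continuous f /\
      forall i : 'I_l, (forall x, derivable f x (delta_mx 0 i)) /\
                       Ck_fun k' ('D_(delta_mx 0 i) f)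
  end.

Definition smooth_fun (f : 'rV[R]_l -> R^o) : Prop :=
  forall k, Ck_fun k f.
End Smooth.

Section Dyn.
Variables (R : realType) (n l : nat).
Variable C : 'I_n -> 'I_n -> 'rV[R]_n.
Variable H : 'M[R]_(l, n).                  (* rows: basis h_1..h_l of h *)

Definition abelian_subalg_basis : Prop :=
  row_free H /\ forall i j : 'I_l, bracket C (row i H) (row j H) = 0.

Definition partial_r (r : 'rV[R]_l -> 'M[R]_n) (i : 'I_l) (lam : 'rV[R]_l)
  : 'M[R]_n :=
  \matrix_(a, b) ('D_(delta_mx 0 i) (fun mu => r mu a b)) lam.

Definition triangular_dynamical_rmatrix (r : 'rV[R]_l -> 'M[R]_n) : Prop :=
  (forall lam, is_bivector (r lam)) /\
  (forall a b : 'I_n, smooth_fun (fun lam => r lam a b)) /\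
  (forall lam (i : 'I_l), ad2 C (row i H) (r lam) = 0) /\
  (forall lam,
     tv_add (tv_sum (fun i : 'I_l => wedge12 (row i H) (partial_r r i lam)))
            (tv_scale (1/2) (schouten C (r lam) (r lam))) = @tv_zero R n).

(* i^* : g^* -> h^*, in the coordinates lambda^i = lambda(h_i) *)
Definition istar (xi : 'rV[R]_n) : 'rV[R]_l := xi *m H^T.

Definition in_h (x : 'rV[R]_n) : Prop := (x <= H)%MS.
Definition in_hperp (xi : 'rV[R]_n) : Prop := istar xi = 0.

Definition sharp (rho : 'M[R]_n) (xi : 'rV[R]_n) : 'rV[R]_n := xi *m rho.

Definition splittable (r : 'rV[R]_l -> 'M[R]_n) : Prop :=
  forall lam (mu : 'rV[R]_l),
    exists xi : 'rV[R]_n, in_h (sharp (r lam) xi) /\ istar xi = mu.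

Definition in_g_lambda (r : 'rV[R]_l -> 'M[R]_n) lam (x : 'rV[R]_n) : Prop :=
  exists y eta, in_h y /\ in_hperp eta /\ x = y + sharp (r lam) eta.

Definition complement_basis k (E : 'M[R]_(k, n)) : Prop :=
  row_free (col_mx H E) /\ row_full (col_mx H E).

Definition skew_mx k (M : 'M[R]_k) : Prop := M^T = - M.

Definition decomp k (E : 'M[R]_(k, n)) (A : 'M[R]_l) (B : 'M[R]_(l, k))
  (Cc : 'M[R]_k) : 'M[R]_n :=
  \sum_(i < l) \sum_(j < l) A i j *: wedge2 (row i H) (row j H)
  + \sum_(i < l) \sum_(j < k) B i j *: wedge2 (row i H) (row j E)
  + \sum_(i < k) \sum_(j < k) Cc i j *: wedge2 (row i E) (row j E).

(* A = T h^* x g, Lambda^#_lambda (h, xi) = (i^* xi, -h + r(lambda)^# xi);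
   the h-component of A^*_lambda = h (+) g^* is given by its coordinates
   c in the basis h_1..h_l, i.e. h = c *m H. *)
Definition Lambda_sharp (r : 'rV[R]_l -> 'M[R]_n) lam
  (p : 'rV[R]_l * 'rV[R]_n) : 'rV[R]_l * 'rV[R]_n :=
  (istar p.2, - (p.1 *m H) + sharp (r lam) p.2).

Definition in_B (r : 'rV[R]_l -> 'M[R]_n) lam (q : 'rV[R]_l * 'rV[R]_n) : Prop :=
  exists p, Lambda_sharp r lam p = q.

End Dyn.

From HB Require Import structures.
From mathcomp Require Import all_boot all_order all_algebra.
From mathcomp Require Import all_classical all_reals all_analysis.
From mathcomp Require Import ring.
Set Implicit Arguments. Unset Strict Implicit. Unset Printing Implicit Defensive.
Import Order.TTheory GRing.Theory Num.Theory.
Local Open Scope ring_scope.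

(* Everything happens at a fixed λ and is linear algebra: only the independence
   of h_1, ..., h_l and the skewness of r(λ) are used.  (ii) and (v) restate
   (i), since two covectors with the same restriction to h differ by an element
   of h^⊥.  Given a complement m with basis (e_j), the m-component of
   r(λ)^# ξ is ξ(h) B + 2 ξ(e) C, and the pairings ξ(h), ξ(e) of ξ with the two
   bases can be prescribed independently; so i^* ξ can be prescribed with
   r(λ)^# ξ ∈ h iff the rows of B lie in the span of the rows of C.  This gives
   (i) <-> (iii) and (iv) -> (i).  Conversely, splittability yields ξ_1, ...,
   ξ_l with r(λ)^# ξ_i ∈ h and ξ_i(h_j) = δ_ij, and taking m inside their common
   kernel forces B = 0. *)

Lemma tr_row_mul_row (R : comPzRingType) m p q (X : 'M[R]_(p, m))
    (Y : 'M[R]_(q, m)) i j :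
  (row i X)^T *m row j Y = X^T *m delta_mx i j *m Y.
Proof.
by rewrite !rowE trmx_mul trmx_delta -!mulmxA (mulmxA (delta_mx i 0)) mul_delta_mx.
Qed.

Lemma trmx_sum_delta (R : pzSemiRingType) p q (A : 'M[R]_(p, q)) :
  A^T = \sum_i \sum_j A i j *: delta_mx j i.
Proof.
rewrite {1}(matrix_sum_delta A) !raddf_sum; apply: eq_bigr => i _.
rewrite raddf_sum; apply: eq_bigr => j _.
by rewrite -trmx_delta; apply/matrixP => a b; rewrite !mxE.
Qed.

Section Splittable.
Variables (R : realType) (n l : nat) (H : 'M[R]_(l, n)).

Lemma sum_wedge2 p q (X : 'M[R]_(p, n)) (Y : 'M[R]_(q, n)) (A : 'M[R]_(p, q)) :
  \sum_i \sum_j A i j *: wedge2 (row i X) (row j Y)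
  = X^T *m A *m Y - Y^T *m A^T *m X.
Proof.
rewrite [A^T]trmx_sum_delta {2}(matrix_sum_delta A).
rewrite !mulmx_sumr !mulmx_suml -sumrB; apply: eq_bigr => i _.
rewrite !mulmx_sumr !mulmx_suml -sumrB; apply: eq_bigr => j _.
by rewrite /wedge2 !tr_row_mul_row scalerBr -!scalemxAr -!scalemxAl.
Qed.

Lemma decompE k (E : 'M[R]_(k, n)) A B Cc :
  decomp H E A B Cc = (H^T *m A *m H - H^T *m A^T *m H)
     + (H^T *m B *m E - E^T *m B^T *m H) + (E^T *m Cc *m E - E^T *m Cc^T *m E).
Proof. by rewrite /decomp !sum_wedge2. Qed.

Lemma mulmx_decomp k (E : 'M[R]_(k, n)) A B Cc (xi : 'rV[R]_n) :
  xi *m decomp H E A B Cc =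
   (xi *m H^T *m (A - A^T) - xi *m E^T *m B^T) *m H
   + (xi *m H^T *m B + xi *m E^T *m (Cc - Cc^T)) *m E.
Proof.
rewrite decompE ?(mulmxDr, mulmxBr, mulmxDl, mulmxBl) ?(mulmxN, mulNmx) !mulmxA.
by rewrite -!addrA; congr (_ + (_ + _)); rewrite addrCA.
Qed.

Lemma decomp_B0 k (E : 'M[R]_(k, n)) A B Cc : B *m E = 0 ->
  decomp H E A B Cc = decomp H E A 0 Cc.
Proof.
move=> BE0; have EB0 : E^T *m B^T = 0 by rewrite -trmx_mul BE0 trmx0.
rewrite !decompE -(mulmxA H^T B) BE0 EB0.
by rewrite trmx0 !(mulmx0, mul0mx) subr0.
Qed.

Section Complement.
Variables (k : nat) (E : 'M[R]_(k, n)).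
Hypothesis E_compl : complement_basis H E.

Lemma complement_basis_inv :
  exists Q : 'M[R]_(n, l + k), col_mx H E *m Q = 1%:M /\ Q *m col_mx H E = 1%:M.
Proof.
case: E_compl => /row_freeP[Q1 hQ1] /row_fullP[Q2 hQ2].
have Q21 : Q2 = Q1 by rewrite -[Q2]mulmx1 -hQ1 mulmxA hQ2 mul1mx.
by exists Q1; rewrite -{2}Q21.
Qed.

Lemma complement_basis_pairing (mu : 'rV[R]_l) (nu : 'rV[R]_k) :
  exists xi : 'rV[R]_n, xi *m H^T = mu /\ xi *m E^T = nu.
Proof.
have [Q [PQ _]] := complement_basis_inv.
exists (row_mx mu nu *m Q^T).
have : row_mx mu nu *m Q^T *m (col_mx H E)^T = row_mx mu nu.
  by rewrite -mulmxA -trmx_mul PQ trmx1 mulmx1.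
by rewrite tr_col_mx mul_mx_row => /eq_row_mx.
Qed.

Lemma complement_basis_sub_h (x : 'rV[R]_k) : (x *m E <= H)%MS -> x *m E = 0.
Proof.
have [Q [PQ _]] := complement_basis_inv.
case/submxP=> y xEy.
have yx_ker : row_mx (- y) x *m col_mx H E = 0.
  by rewrite mul_row_col xEy mulNmx addNr.
have : row_mx (- y) x = row_mx 0 0.
  by rewrite row_mx0 -[row_mx _ _]mulmx1 -PQ mulmxA yx_ker mul0mx.
by case/eq_row_mx => _ ->; rewrite mul0mx.
Qed.

Lemma complement_basis_decomp (rho : 'M[R]_n) : is_bivector rho ->
  exists A B Cc, [/\ skew_mx A, skew_mx Cc & rho = decomp H E A B Cc].
Proof.
move=> rho_skew; have [Q [PQ QP]] := complement_basis_inv.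
set P := col_mx H E; set M := Q^T *m rho *m Q.
have M_skew : M^T = - M by rewrite /M !trmx_mul trmxK rho_skew mulNmx mulmxN mulmxA.
have rhoE : rho = P^T *m M *m P.
  by rewrite /M !mulmxA -trmx_mul QP trmx1 mul1mx -mulmxA QP mulmx1.
move: M_skew; rewrite -(submxK M) tr_block_mx opp_block_mx.
case/eq_block_mx => ul_skew dl_ur ur_dl dr_skew.
have half2 : (2^-1 + 2^-1 : R) = 1 by field.
exists (2^-1 *: ulsubmx M), (ursubmx M), (2^-1 *: drsubmx M); split.
- by rewrite /skew_mx linearZ /= ul_skew scalerN.
- by rewrite /skew_mx linearZ /= dr_skew scalerN.
rewrite {1}rhoE -[M in P^T *m M](submxK M) /P tr_col_mx mul_row_block.
rewrite mul_row_col !mulmxDl decompE !linearZ /= ul_skew dr_skew ur_dl.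
rewrite !(mulmxN, mulNmx, scalerN, opprK) -!mulmxDl -!scalerDl half2 !scale1r.
by rewrite !mulmxDl -!addrA; congr (_ + _); rewrite addrCA.
Qed.

End Complement.

Lemma complement_basis_kermx (K : 'M[R]_(n, l)) : H *m K = 1%:M ->
  complement_basis H (row_base (kermx K)) /\ row_base (kermx K) *m K = 0.
Proof.
move=> HK; have EK := eq_row_base (kermx K).
have rK : \rank K = l.
  by apply/eqP; rewrite -(mxrank_tr K); apply/row_freeP; exists H^T;
    rewrite -trmx_mul HK trmx1.
have rH : \rank H = l by apply/eqP/row_freeP; exists K.
have lln : (l <= n)%N by rewrite -rH rank_leq_col.
have EK0 : row_base (kermx K) *m K = 0 by apply/sub_kermxP; rewrite EK.
have rE : \rank (row_base (kermx K)) = (n - l)%N by rewrite EK mxrank_ker rK.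
have HE0 : (H :&: row_base (kermx K))%MS = 0.
  apply/eqP; rewrite -submx0; apply/rV_subP => v.
  rewrite sub_capmx EK => /andP[/submxP[c ->] /sub_kermxP].
  by rewrite -mulmxA HK mulmx1 => ->; rewrite mul0mx sub0mx.
have rHE := mxrank_disjoint_sum HE0.
rewrite addsmxE rH rE in rHE.
split=> //; split; rewrite /row_free /row_full rHE.
- by rewrite eqn_add2l mxrank_ker rK.
- by rewrite subnKC.
Qed.

Definition splittable_at (rho : 'M[R]_n) :=
  forall mu : 'rV[R]_l, exists xi, in_h H (sharp rho xi) /\ istar H xi = mu.

Lemma splittable_at_iff_sharp (rho : 'M[R]_n) : row_free H ->
  splittable_at rho <-> forall xi, exists y eta,
    in_h H y /\ in_hperp H eta /\ sharp rho xi = y + sharp rho eta.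
Proof.
case/row_freeP=> K HK; split=> [split_rho xi | sharp_rho mu].
- have [xi' [xi'_h xi'_mu]] := split_rho (istar H xi).
  exists (sharp rho xi'), (xi - xi'); split=> //; split.
    by rewrite /in_hperp /istar in xi'_mu *; rewrite mulmxBl xi'_mu subrr.
  by rewrite /sharp mulmxBl addrC subrK.
- have [y [eta [y_h [eta_perp eq_sharp]]]] := sharp_rho (mu *m K^T).
  exists (mu *m K^T - eta); split.
    by rewrite /in_h /sharp in eq_sharp *; rewrite mulmxBl eq_sharp addrK.
  move: eta_perp; rewrite /in_hperp /istar mulmxBl => ->.
  by rewrite subr0 -mulmxA -trmx_mul HK trmx1 mulmx1.
Qed.

Lemma splittable_at_iff_Lambda (r : 'rV[R]_l -> 'M[R]_n) lam :
  splittable_at (r lam) <-> forall mu, in_B H r lam (mu, 0).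
Proof.
split=> [split_r mu | in_B_r mu].
- have [xi [/submxP[c hc] xi_mu]] := split_r mu.
  by exists (c, xi); rewrite /Lambda_sharp /= xi_mu /sharp -hc addNr.
- have [[c xi] [xi_mu]] := in_B_r mu.
  move/eqP; rewrite addrC subr_eq0 => /eqP sharp_c.
  by exists xi; rewrite /in_h sharp_c submxMl.
Qed.

Lemma splittable_at_B_sub_C (rho : 'M[R]_n) : splittable_at rho ->
  forall k (E : 'M[R]_(k, n)), complement_basis H E ->
  forall A B Cc, skew_mx Cc -> rho = decomp H E A B Cc ->
  forall i, (row i (B *m E) <= Cc *m E)%MS.
Proof.
move=> split_rho k E E_compl A B Cc Cc_skew rhoE i.
have [xi [xi_h xi_i]] := split_rho (delta_mx 0 i).
set nu := xi *m E^T.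
have e_part_h : ((delta_mx 0 i *m B + nu *m (Cc - Cc^T)) *m E <= H)%MS.
  have -> : (delta_mx 0 i *m B + nu *m (Cc - Cc^T)) *m E =
      sharp rho xi - (delta_mx 0 i *m (A - A^T) - nu *m B^T) *m H.
    by rewrite /sharp rhoE mulmx_decomp (xi_i : xi *m H^T = _) [_ + _ *m E]addrC addrK.
  by apply: addmx_sub => //; rewrite eqmx_opp submxMl.
move/(complement_basis_sub_h E_compl)/eqP: e_part_h.
rewrite mulmxDl Cc_skew opprK addr_eq0 => /eqP BE_CE.
rewrite rowE mulmxA BE_CE eqmx_opp -mulmxA mulmxDl mulmxDr.
by apply: addmx_sub; exact: submxMl.
Qed.

Lemma B_sub_C_splittable_at (rho : 'M[R]_n) : row_free H -> is_bivector rho ->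
  (forall k (E : 'M[R]_(k, n)), complement_basis H E ->
    forall A B Cc, skew_mx A -> skew_mx Cc -> rho = decomp H E A B Cc ->
    forall i, (row i (B *m E) <= Cc *m E)%MS) -> splittable_at rho.
Proof.
case/row_freeP=> K HK rho_skew B_sub_C mu.
set E := row_base (kermx K).
have [E_compl _] := complement_basis_kermx HK.
have [A [B [Cc [A_skew Cc_skew rhoE]]]] := complement_basis_decomp E_compl rho_skew.
have BE_CE : (B *m E <= Cc *m E)%MS.
  by apply/row_subP; exact: B_sub_C E_compl A B Cc A_skew Cc_skew rhoE.
have /submxP[w muBE] := submx_trans (submxMl mu _) BE_CE.
(* pairing ξ with e as -w/2 cancels the e-component μ B E = w C E *)
have [xi [xi_mu xi_w]] := complement_basis_pairing E_compl mu (- 2^-1 *: w).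
exists xi; split=> //.
rewrite /in_h /sharp rhoE mulmx_decomp xi_mu xi_w Cc_skew opprK.
rewrite [(_ + _) *m E]mulmxDl -(mulmxA mu) muBE.
have -> : w *m (Cc *m E) + - 2^-1 *: w *m (Cc + Cc) *m E = 0.
  rewrite mulmxDr mulmxDl -!scalemxAl -!mulmxA -scalerDl.
  by rewrite -{1}[w *m _]scale1r -scalerDl (_ : 1 + _ = 0) ?scale0r //; field.
by rewrite addr0 submxMl.
Qed.

Lemma decomp_B0_splittable_at (rho : 'M[R]_n) :
  (exists k (E : 'M[R]_(k, n)) (A : 'M[R]_l) (Cc : 'M[R]_k),
    [/\ complement_basis H E, skew_mx A, skew_mx Cc & rho = decomp H E A 0 Cc]) ->
  splittable_at rho.
Proof.
case=> k [E [A [Cc [E_compl _ _ rhoE]]]] mu.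
have [xi [xi_mu xi_0]] := complement_basis_pairing E_compl mu 0.
exists xi; split=> //.
rewrite /in_h /sharp rhoE mulmx_decomp xi_mu xi_0.
by rewrite !(mul0mx, mulmx0, addr0, subr0) submxMl.
Qed.

Lemma splittable_at_decomp_B0 (rho : 'M[R]_n) : splittable_at rho ->
  is_bivector rho ->
  exists k (E : 'M[R]_(k, n)) (A : 'M[R]_l) (Cc : 'M[R]_k),
    [/\ complement_basis H E, skew_mx A, skew_mx Cc & rho = decomp H E A 0 Cc].
Proof.
move=> split_rho rho_skew.
have /fin_all_exists[f f_spec] : forall i : 'I_l, exists xi,
    in_h H (sharp rho xi) /\ istar H xi = delta_mx 0 i by move=> i; exact: split_rho.
pose Z := \matrix_i f i.
have HZ : H *m Z^T = 1%:M.
  rewrite -[H]trmxK -trmx_mul -[1%:M]trmx1; congr _^T.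
  by apply/row_matrixP => i; rewrite row_mul rowK row1 ((f_spec i).2 : f i *m H^T = _).
set E := row_base (kermx Z^T).
have [E_compl EZ0] := complement_basis_kermx HZ.
have [A [B [Cc [A_skew Cc_skew rhoE]]]] := complement_basis_decomp E_compl rho_skew.
exists _, E, A, Cc; split=> //; rewrite rhoE decomp_B0 //.
apply/row_matrixP => i; rewrite row0 row_mul rowE.
have fE0 : f i *m E^T = 0.
  have ZE0 : Z *m E^T = 0 by rewrite -[LHS]trmxK trmx_mul trmxK EZ0 trmx0.
  by rewrite -(rowK f i) -row_mul ZE0 row0.
apply: (complement_basis_sub_h E_compl).
have -> : delta_mx 0 i *m B *m E =
    sharp rho (f i) - delta_mx 0 i *m (A - A^T) *m H.
  rewrite /sharp rhoE mulmx_decomp fE0 ((f_spec i).2 : f i *m H^T = _).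
  by rewrite !mul0mx subr0 addr0 addrC addKr.
by apply: addmx_sub; [exact: (f_spec i).1 | rewrite eqmx_opp submxMl].
Qed.

End Splittable.

Theorem proposition2p7 (R : realType) (n l : nat)
  (C : 'I_n -> 'I_n -> 'rV[R]_n) (H : 'M[R]_(l, n))
  (r : 'rV[R]_l -> 'M[R]_n) :
  is_lie_algebra C ->
  abelian_subalg_basis C H ->
  triangular_dynamical_rmatrix C H r ->
  [/\ (splittable H r <->
        forall lam (xi : 'rV[R]_n), in_g_lambda H r lam (sharp (r lam) xi)),
      (splittable H r <->
        forall k (E : 'M[R]_(k, n)), complement_basis H E ->
        forall lam (A : 'M[R]_l) (B : 'M[R]_(l, k)) (Cc : 'M[R]_k),
          skew_mx A -> skew_mx Cc -> r lam = decomp H E A B Cc ->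
          forall i : 'I_l, (row i (B *m E) <= Cc *m E)%MS),
      (splittable H r <->
        forall lam, exists k (E : 'M[R]_(k, n)) (A : 'M[R]_l) (Cc : 'M[R]_k),
          [/\ complement_basis H E, skew_mx A, skew_mx Cc &
              r lam = decomp H E A 0 Cc]) &
      (splittable H r <->
        forall lam (mu : 'rV[R]_l), in_B H r lam (mu, 0))].
Proof.
move=> _ [H_free _] [r_skew _].
have split_at lam : splittable H r -> splittable_at H (r lam) by apply.
split.
- split=> [split_r lam | cond lam]; apply/(splittable_at_iff_sharp _ H_free).
    exact: split_at.
  exact: cond.
- split=> [split_r k E E_compl lam A B Cc _ Cc_skew | cond lam].
    exact (splittable_at_B_sub_C (split_at lam split_r) E_compl Cc_skew).
  apply: B_sub_C_splittable_at H_free (r_skew lam) _ => k E E_compl A B Cc.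
  exact: cond E_compl lam A B Cc.
- split=> [split_r lam | cond lam].
    exact: splittable_at_decomp_B0 (split_at lam split_r) (r_skew lam).
  exact: decomp_B0_splittable_at (cond lam).
- split=> [split_r lam | cond lam]; apply/splittable_at_iff_Lambda.
    exact: split_at.
  exact: cond.
Qed.
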